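(* Fix $0\le j<n$ and the sequence $(\mu^k)_{k\ge 0}$ of $\lambda^{j^*}$-building functions. For every transition $\mathbf e\in\mathcal E_{\ge j}$, every $i\in[n]$ and every $k>0$, we have $\mu^k_i(\mathbf e)\le\mu^{k-1}_i(\mathbf e)$.
   Context: Dynamic NCG $(\mathcal A,n)$: arena $\mathcal A=(V,E,\mathsf{src},\mathsf{tgt})$, $V$ finite, $E$ a partial function from $V\times V$ to non-decreasing piecewise-affine functions $\mathbb N\to\mathbb N$ (edge $e$ has cost $\ell_e$); $\mathsf{tgt}$ has only a self-loop of cost $0$ and is reachable from all states; players $[n]$. Configurations are maps $c:[n]\to V$, $c_{\mathsf{tgt}}$ maps everyone to $\mathsf{tgt}$. From $c$, a move vector $(e_i)_i$ ($e_i$ an edge leaving $c(i)$) gives the transition $(c,w,c')$ with $c'(i)$ the target of $e_i$ and $w(i)=\ell_{e_i}(u_i)$, $u_i=|\{j: e_j=e_i\}|$; write $c\Rightarrow c'$, $\mathrm{cost}_i(c,c')=w(i)$, and $T$ for the set of transitions. For a path $\rho=(t_k)_{k\ge1}$ of consecutive transitions, $\rho_{\ge k}$ is its suffix starting with $t_k$ and $\mathrm{cost}_i(\rho)$ is player $i$'s total payment. $\mathrm{dev}_i(c,c')=\{c''\mid c\Rightarrow c'',\ c''(l)=c'(l)\ \forall l\neq i\}$. Let $X_m$ be the set of configurations with exactly $m$ players at $\mathsf{tgt}$, $X_{\ge m}=\bigcup_{m'\ge m}X_{m'}$, $\mathcal E_m=\{(c,w,c')\in T: c\in X_m\}$, $\mathcal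 E_{\ge m}=\{(c,w,c')\in T: c\in X_{\ge m}\}$. For a family $\lambda=(\lambda_i)_{i\in[n]}$ with $\lambda_i:\mathcal E_{\ge m}\to\mathbb N\cup\{\pm\infty\}$ and $c\in X_{\ge m}$, a path $\rho=(t_k)$ from $c$ visiting $c_{\mathsf{tgt}}$ is $\lambda$-consistent if $\mathrm{cost}_i(\rho_{\ge k})\le\lambda_i(t_k)$ for all $i$ and all $k$; $\Lambda_\lambda(c)$ is the set of such paths. Define $\lambda^{n^*}_i(c_{\mathsf{tgt}},0^n,c_{\mathsf{tgt}})=0$. For $j<n$, given $\lambda^{(j+1)^*}$, the $\lambda^{j^*}$-building functions $\mu^k_i:\mathcal E_{\ge j}\to\mathbb N\cup\{\pm\infty\}$ are: $\mu^k_i(\mathbf e)=\lambda^{(j+1)^*}_i(\mathbf e)$ for $\mathbf e\in\mathcal E_{\ge j+1}$; for $\mathbf e=(c,w,c')\in\mathcal E_j$: $\mu^0_i(\mathbf e)=0$ if $c(i)=\mathsf{tgt}$ and $+\infty$ otherwise; for $k>0$, $\mu^k_i(\mathbf e)=0$ if $c(i)=\mathsf{tgt}$, and otherwise $\mu^k_i(\mathbf e)=\min_{c''\in\mathrm{dev}_i(c,c')}\sup_{\rho\in\Lambda_{\mu^{k-1}}(c'')}(\mathrm{cost}_i(c,c'')+\mathrm{cost}_i(\rho))$ if $\Lambda_{\mu^{k-1}}(\tilde c)\neq\emptyset$ for every $(c,\tilde w,\tilde c)\in T$, and $-\infty$ otherwise. $\lambda^{j^*}$ is the pointwise limit of $(\mu^k)_k$.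 *)

(* Values in N ∪ {±∞} are encoded in \bar R. *)
From HB Require Import structures.
From mathcomp Require Import all_boot all_order all_algebra.
From mathcomp Require Import all_classical all_reals all_analysis.
Set Implicit Arguments. Unset Strict Implicit. Unset Printing Implicit Defensive.
Import Order.TTheory GRing.Theory Num.Theory.
Local Open Scope classical_set_scope.
Local Open Scope ring_scope.

Definition nondecr (f : nat -> nat) : Prop := forall x y, (x <= y)%N -> (f x <= f y)%N.

(* f : N -> N is piecewise affine (finitely many pieces).  Since f is N-valued,
   this amounts to f being affine (with integer coefficients) from some point on. *)
Definition piecewise_affine (f : nat -> nat) : Prop :=
  exists (N : nat) (a b : int), forall x, (N <= x)%N -> (f x)%:Z = a * x%:Z + b.

(* E u v = Some l : there is an edge u -> v with cost function l. *)
Definition arena_ok (V : finType) (E : V -> V -> option (nat -> nat)) (tgt : V) : Prop :=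
  [/\ (forall u v l, E u v = Some l -> nondecr l /\ piecewise_affine l),
      (forall v, v != tgt -> E tgt v = None),
      (exists l, E tgt tgt = Some l /\ forall x, l x = 0%N) &
      (forall v, connect (fun u w => isSome (E u w)) v tgt)].

Section NCG.
Variables (R : realType) (V : finType) (E : V -> V -> option (nat -> nat)) (tgt : V) (n : nat).

Definition config := {ffun 'I_n -> V}.
Definition ctgt : config := [ffun => tgt].

(* number of players at tgt: c \in X_m iff ntgt c = m *)
Definition ntgt (c : config) : nat := #|[set i | c i == tgt]|.

Definition step (c c' : config) : Prop := forall i, isSome (E (c i) (c' i)).

Definition load (c c' : config) (i : 'I_n) : nat :=
  #|[set l | (c l == c i) && (c' l == c' i)]|.

Definition wcost (c c' : config) (i : 'I_n) : nat :=
  if E (c i) (c' i) is Some l then l (load c c' i) else 0%N.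

Definition dev (i : 'I_n) (c c' : config) : set config :=
  [set c'' | step c c'' /\ forall l, l != i -> c'' l = c' l].

(* A path rho = (t_k)_{k>=0} from c visiting c_tgt, given by its sequence of
   configurations p, with t_k = (p k, w, p k.+1). *)
Definition is_path (p : nat -> config) (c : config) : Prop :=
  [/\ p 0%N = c, (forall k, step (p k) (p k.+1)) & exists k, p k = ctgt].

Definition cost_from (p : nat -> config) (i : 'I_n) (k : nat) : \bar R :=
  (\sum_(k <= m <oo) ((wcost (p m) (p m.+1) i)%:R)%:E)%E.

Definition lamT := 'I_n -> config -> config -> \bar R.

Definition consistent (lam : lamT) (p : nat -> config) : Prop :=
  forall i k, (cost_from p i k <= lam i (p k) (p k.+1))%E.

Definition Lambda (lam : lamT) (c : config) : set (nat -> config) :=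
  [set p | is_path p c /\ consistent lam p].

Section Building.
Variables (lamnext : lamT) (j : nat).

(* the lambda^{j*}-building functions mu^k, given lambda^{(j+1)*} = lamnext;
   mu k i c c' stands for mu^k_i((c, w, c')) (w being determined by c, c'). *)
Fixpoint mu (k : nat) : lamT :=
  fun i c c' =>
  if (j < ntgt c)%N then lamnext i c c'
  else if c i == tgt then 0%E
  else match k with
       | 0%N => +oo%E
       | k'.+1 =>
         if `[< forall ct, step c ct -> Lambda (mu k') ct !=set0 >] then
           ereal_inf [set ereal_sup
                         [set ((wcost c c'' i)%:R%:E + cost_from p i 0)%E
                         | p in Lambda (mu k') c'']
                     | c'' in dev i c c']
         else -oo%E
       end.

End Building.

(* lam_from d = lambda^{(n-d)*} *)
Fixpoint lam_from (d : nat) : lamT :=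
  match d with
  | 0%N => fun _ _ _ => 0%E
  | d'.+1 => fun i c c' => limn (fun k => mu (lam_from d') (n - d'.+1) k i c c')
  end.

Definition lambda_star (j : nat) : lamT := lam_from (n - j).

End NCG.

(* The k-th building function is obtained from the (k-1)-th by a monotone
   operator: tighter bounds admit fewer consistent paths, so every supremum
   over consistent paths decreases, hence so does the infimum over deviations,
   and the guard "every successor has a consistent path" can only fail more
   often, which yields -oo.  Since mu^0 is +oo off the target, mu^1 <= mu^0,
   and induction on k propagates the inequality. *)
From HB Require Import structures.
From mathcomp Require Import all_boot all_order all_algebra.
From mathcomp Require Import all_classical all_reals all_analysis.
Import Order.TTheory GRing.Theory Num.Theory.
Local Open Scope classical_set_scope.
Local Open Scope ring_scope.

Lemma le_ereal_inf_sup_image (R : realType) (T U : Type) (D : set T)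
    (A B : T -> set U) (f : T -> U -> \bar R) :
  (forall t, A t `<=` B t) ->
  (ereal_inf [set ereal_sup [set f t u | u in A t] | t in D]
   <= ereal_inf [set ereal_sup [set f t u | u in B t] | t in D])%E.
Proof.
move=> AB; apply: le_ereal_inf_tmp => _ [t Dt <-].
apply: ge_ereal_inf; exists (ereal_sup [set f t u | u in A t]); first by exists t.
by apply: ereal_sup_le; apply: image_subset.
Qed.

Section BuildingFunctions.
Variables (R : realType) (V : finType) (E : V -> V -> option (nat -> nat)).
Variables (tgt : V) (n : nat).

Lemma subset_Lambda (lam lam' : lamT R V n) (c : config V n) :
  (forall i a b, (lam i a b <= lam' i a b)%E) ->
  Lambda E tgt lam c `<=` Lambda E tgt lam' c.
Proof.
move=> le_lam p [path_p cons_p]; split=> // i k.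
exact: le_trans (cons_p i k) (le_lam _ _ _).
Qed.

Lemma mu_succ_le (lamnext : lamT R V n) (j k : nat) i c c' :
  (mu E tgt lamnext j k.+1 i c c' <= mu E tgt lamnext j k i c c')%E.
Proof.
elim: k i c c' => [|k IHk] i c c' /=; case: ifP => // _; case: ifP => // _.
  by rewrite leey.
have sub_Lambda ct : Lambda E tgt (mu E tgt lamnext j k.+1) ct `<=`
                     Lambda E tgt (mu E tgt lamnext j k) ct.
  by apply: subset_Lambda => *; apply: IHk.
case: asboolP => [Lambda_succ_ne0|_]; last by rewrite leNye.
case: asboolP => [_|[]]; last first.
  move=> ct /Lambda_succ_ne0 [p Lp]; exists p; exact: sub_Lambda.
exact: le_ereal_inf_sup_image.
Qed.

End BuildingFunctions.

Theorem lemmaC4 (R : realType) (V : finType) (E : V -> V -> option (nat -> nat))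
  (src tgt : V) (n : nat) (HA : arena_ok E tgt) (j : nat) (hj : (j < n)%N)
  (c c' : config V n) (hstep : step E c c') (hc : (j <= ntgt tgt c)%N)
  (i : 'I_n) (k : nat) (hk : (0 < k)%N) :
  (@mu R V E tgt n (@lambda_star R V E tgt n j.+1) j k i c c'
   <= @mu R V E tgt n (@lambda_star R V E tgt n j.+1) j k.-1 i c c')%E.
Proof. by case: k hk => // k _; apply: mu_succ_le. Qed.
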